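(* Let $L$ be a finite semidistributive extremal lattice with $|L|>1$. Then the order dimension of $L$ equals the chromatic number of the complement $\overline{G(L)}$ of its Galois graph.
   Context: A lattice is semidistributive if $x\vee y=x\vee z$ implies $x\vee(y\wedge z)=x\vee y$ and $x\wedge y=x\wedge z$ implies $x\wedge(y\vee z)=x\wedge y$. $L$ is extremal if its length $n$ (maximum number of elements of a chain minus one) equals both the number of join-irreducible elements and the number of meet-irreducible elements. For extremal $L$, choosing a chain $\hat0=x_0\lessdot\dots\lessdot x_n=\hat1$ of length $n$ gives numberings $j_1,\dots,j_n$ of the join-irreducibles and $m_1,\dots,m_n$ of the meet-irreducibles with $x_i=j_1\vee\dots\vee j_i=m_{i+1}\wedge\dots\wedge m_n$. The Galois graph $G(L)$ is the directed graph on the join-irreducibles with an edge $j_i\to j_k$ whenever $i\ne k$ and $j_i\not\le m_k$. Its complement $\overline{G(L)}$ is the simple undirected graph on the same vertices with an edge between two vertices iff there is no directed edge between them in either direction. The order dimension of a poset $P$ is the least $d$ such that $P$ is isomorphic to a subposet of $\mathbb R^d$ with the componentwise order. *)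

From Stdlib Require Import Rdefinitions Raxioms RIneq.
From HB Require Import structures.
From mathcomp Require Import all_boot all_order.
From mathcomp Require Import boolp.

Set Implicit Arguments.
Unset Strict Implicit.
Unset Printing Implicit Defensive.

Import Order.TTheory.
Local Open Scope order_scope.

Section LatticeDefs.
Context {disp : Order.disp_t} {L : finTBLatticeType disp}.

Definition join_irreducible (j : L) : bool :=
  (j != \bot) && [forall x : L, forall y : L, (j == x `|` y) ==> (j == x) || (j == y)].

Definition meet_irreducible (m : L) : bool :=
  (m != \top) && [forall x : L, forall y : L, (m == x `&` y) ==> (m == x) || (m == y)].

Definition is_chain (C : {set L}) : bool :=
  [forall x in C, forall y in C, (x <= y) || (y <= x)].

Definition lattice_length : nat := (\max_(C : {set L} | is_chain C) #|C|).-1.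

Definition semidistributive : Prop :=
  (forall x y z : L, x `|` y = x `|` z -> x `|` (y `&` z) = x `|` y) /\
  (forall x y z : L, x `&` y = x `&` z -> x `&` (y `|` z) = x `&` y).

Definition extremal : Prop :=
  lattice_length = #|[set j : L | join_irreducible j]| /\
  lattice_length = #|[set m : L | meet_irreducible m]|.

Definition covers (a b : L) : bool :=
  (a < b) && [forall z : L, ~~ ((a < z) && (z < b))].

(* The data obtained from a chain  \hat0 = x_0 <. x_1 <. ... <. x_n = \hat1
   of length n: numberings j_1..j_n (here j 0 .. j (n-1)) of the
   join-irreducibles and m_1..m_n (here m 0 .. m (n-1)) of the
   meet-irreducibles with x_i = j_1 \/ ... \/ j_i = m_{i+1} /\ ... /\ m_n. *)
Definition galois_numbering (n : nat) (x : nat -> L) (j m : 'I_n -> L) : Prop :=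
  [/\ x 0%N = \bot /\ x n = \top,
      (forall i : nat, (i < n)%N -> covers (x i) (x i.+1)),
      ((forall k : 'I_n, join_irreducible (j k)) /\ injective j),
      ((forall k : 'I_n, meet_irreducible (m k)) /\ injective m) &
      (forall i : nat, (i <= n)%N ->
         x i = \join_(k < n | (k < i)%N) j k /\
         x i = \meet_(k < n | (i <= k)%N) m k)].

Definition galois_edge (n : nat) (j m : 'I_n -> L) : rel 'I_n :=
  fun a b => (a != b) && ~~ (j a <= m b).

Definition galois_complement (n : nat) (j m : 'I_n -> L) : rel 'I_n :=
  fun a b => (a != b) && ~~ galois_edge j m a b && ~~ galois_edge j m b a.

End LatticeDefs.

Definition colorable (V : finType) (adj : rel V) (k : nat) : bool :=
  [exists f : {ffun V -> 'I_k},
     [forall u, forall v, ((u != v) && adj u v) ==> (f u != f v)]].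

Lemma colorable_exists (V : finType) (adj : rel V) : exists k, colorable adj k.
Proof.
exists #|V|; apply/existsP; exists [ffun v => enum_rank v].
apply/forallP => u; apply/forallP => v; apply/implyP => /andP [uv _].
rewrite !ffunE; apply: contra uv => /eqP /enum_rank_inj ->; exact: eqxx.
Qed.

Definition chromatic_number (V : finType) (adj : rel V) : nat :=
  ex_minn (colorable_exists adj).

Definition embeds_in_Rd (d0 : Order.disp_t) (P : porderType d0) (d : nat) : Prop :=
  exists f : P -> 'I_d -> R,
    forall x y : P, (x <= y) <-> (forall i : 'I_d, Rle (f x i) (f y i)).

Lemma embeds_exists (d0 : Order.disp_t) (P : finPOrderType d0) :
  exists d, `[< embeds_in_Rd P d >].
Proof.
exists #|P|; apply/asboolP.
exists (fun x i => if (enum_val i <= x) then R1 else R0) => x y; split.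
- move=> xy i; case: ifP => hx.
  + by rewrite (le_trans hx xy); apply: Rle_refl.
  + by case: ifP => _; [apply: Rle_0_1 | apply: Rle_refl].
- move=> /(_ (enum_rank x)); rewrite enum_rankK lexx; case: ifP => // _ H.
  exfalso; exact: (Rlt_not_le _ _ Rlt_0_1 H).
Qed.

Definition order_dim (d0 : Order.disp_t) (P : finPOrderType d0) : nat :=
  ex_minn (embeds_exists P).

From mathcomp Require Import all_boot all_order boolp.
From Stdlib Require Import Rdefinitions RIneq Lra.

(** For a join-irreducible w let w_* be the join of the elements below w and
    kappa(w) the join of all v with v /\ w = w_*.  Meet-semidistributivity
    makes kappa(w) /\ w = w_*, so kappa(w) is meet-irreducible and w is not
    below it; join-semidistributivity makes kappa injective.  Whenever y is
    not below z, a minimal w <= y not below z is join-irreducible and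
    z <= kappa(w).  In an extremal lattice the numbering satisfies j_a <= m_b
    for a < b, whence kappa(j_a) = m_a, and y is not below z iff j_a <= y and
    z <= m_a for some a.

    Given an embedding into R^d, colour a by a coordinate in which m_a is
    strictly smaller than j_a: if j_u <= m_v and j_v <= m_u, then u and v
    cannot share a colour.  Conversely, a proper colouring of the complement
    of G(L) with k colours gives k monotone coordinates
    y |-> max {a + 1 | a has colour c and j_a <= y}; the colouring forces this
    coordinate to be at most a at m_a when c is the colour of a, so the
    witness a separates y from z. *)

Set Implicit Arguments.
Unset Strict Implicit.
Unset Printing Implicit Defensive.

Import Order.TTheory.
Local Open Scope order_scope.

Lemma inj_card_onto_set (T : finType) (n : nat) (f : 'I_n -> T) (A : {set T}) :
  injective f -> (forall a, f a \in A) -> #|A| = n ->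
  forall t, t \in A -> exists a, f a = t.
Proof.
move=> f_inj fA cardA t tA.
have imfA : [set f a | a in 'I_n] = A.
  apply/eqP; rewrite eqEcard card_imset // card_ord cardA leqnn andbT.
  by apply/subsetP => _ /imsetP[a _ ->].
by move: tA; rewrite -imfA => /imsetP[a _ ->]; exists a.
Qed.

Section Kappa.
Context {disp : Order.disp_t} {L : finTBLatticeType disp}.
Implicit Types (u v w y z : L).

Definition join_below w : L := \join_(v | v < w) v.

Definition kappa w : L := \join_(v | v `&` w == join_below w) v.

Lemma join_irreducibleP w :
  reflect (w != \bot /\ forall u v, w = u `|` v -> w = u \/ w = v)
          (join_irreducible w).
Proof.
apply: (iffP andP) => -[nb irr]; split=> //.
  move=> u v E; move/forallP/(_ u)/forallP/(_ v): irr.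
  by rewrite -E eqxx /= => /orP[] /eqP; [left|right].
apply/forallP => u; apply/forallP => v; apply/implyP => /eqP/irr.
by case=> <-; rewrite eqxx ?orbT.
Qed.

Lemma meet_irreducibleP w :
  reflect (w != \top /\ forall u v, w = u `&` v -> w = u \/ w = v)
          (meet_irreducible w).
Proof.
apply: (iffP andP) => -[nt irr]; split=> //.
  move=> u v E; move/forallP/(_ u)/forallP/(_ v): irr.
  by rewrite -E eqxx /= => /orP[] /eqP; [left|right].
apply/forallP => u; apply/forallP => v; apply/implyP => /eqP/irr.
by case=> <-; rewrite eqxx ?orbT.
Qed.

Lemma join_below_le w : join_below w <= w.
Proof. by apply/joinsP => v /ltW. Qed.

Lemma le_join_below v w : v < w -> v <= join_below w.
Proof. by move=> vw; apply: (joins_sup (fun v => v)). Qed.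

Lemma join_below_lt w : join_irreducible w -> join_below w < w.
Proof.
case/join_irreducibleP => nb irr; apply: (big_ind (fun t => t < w)) => //.
  by rewrite lt_neqAle eq_sym nb le0x.
move=> a b aw bw; rewrite lt_neqAle leUx (ltW aw) (ltW bw) !andbT.
by apply/eqP => /esym/irr[] E; [move: aw | move: bw]; rewrite -E ltxx.
Qed.

Lemma meet_le_join_below u w : ~~ (w <= u) -> u `&` w <= join_below w.
Proof.
move=> wu; apply: le_join_below; rewrite lt_neqAle leIr andbT.
by apply: contra wu => /eqP <-; exact: leIl.
Qed.

Lemma le_kappa u w : join_below w <= u -> ~~ (w <= u) -> u <= kappa w.
Proof.
move=> bu wu; apply: (joins_sup (fun v => v)).
by rewrite /= eq_le meet_le_join_below // lexI bu join_below_le.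
Qed.

Lemma join_below_le_kappa w : join_below w <= kappa w.
Proof.
by apply: (joins_sup (fun v => v)); apply/eqP/meet_idPl/join_below_le.
Qed.

Lemma exists_join_irreducible_sep y z : ~~ (y <= z) ->
  exists2 w, join_irreducible w & w <= y /\ z <= kappa w.
Proof.
move=> yz.
case: (@arg_minnP _ y (fun w => (w <= y) && ~~ (w <= z))
                   (fun w => #|[set v | v < w]|)); first by rewrite lexx.
move=> w /andP[wy wz] w_min.
have below_z v : v < w -> v <= z.
  move=> vw; apply: contraT => vz.
  have := w_min v; rewrite (le_trans (ltW vw) wy) vz => /(_ isT).
  rewrite leqNgt => /negP[]; apply: proper_card; apply/properP; split.
    by apply/subsetP => u; rewrite !inE => /lt_trans; apply.
  by exists v; rewrite !inE ?ltxx.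
exists w; last by split=> //; apply: le_kappa => //; apply/joinsP => v /below_z.
apply/join_irreducibleP; split.
  by apply: contraNneq wz => ->; rewrite le0x.
move=> a b E; have [<-|aw] := eqVneq w a; first by left.
have [<-|bw] := eqVneq w b; first by right.
have aw' : a < w by rewrite lt_neqAle eq_sym aw E leUl.
have bw' : b < w by rewrite lt_neqAle eq_sym bw E leUr.
by move: wz; rewrite E leUx (below_z _ aw') (below_z _ bw').
Qed.

Hypothesis SD : semidistributive (L := L).

Lemma meetUl_sd a b w c : a `&` w = c -> b `&` w = c -> (a `|` b) `&` w = c.
Proof.
move=> ac bc; rewrite meetC SD.2; first by rewrite meetC.
by rewrite meetC ac meetC bc.
Qed.

Lemma kappa_meet w : kappa w `&` w = join_below w.
Proof.
set b := join_below w.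
suff: (kappa w `|` b) `&` w = b by rewrite (join_idPl (join_below_le_kappa w)).
apply: (big_ind (fun t => (t `|` b) `&` w = b)).
- by rewrite join0x; apply/meet_idPl/join_below_le.
- move=> s t sb tb; rewrite -[b in _ `|` b]joinxx joinACA.
  exact: meetUl_sd.
- by move=> v /eqP; rewrite -/b => vb; rewrite (join_idPl _) // -vb leIl.
Qed.

Lemma kappa_nge w : join_irreducible w -> ~~ (w <= kappa w).
Proof.
move=> Jw; apply/negP => /meet_idPl; rewrite meetC kappa_meet => E.
by move: (join_below_lt Jw); rewrite E ltxx.
Qed.

Lemma meet_irreducible_kappa w :
  join_irreducible w -> meet_irreducible (kappa w).
Proof.
move=> Jw; apply/meet_irreducibleP; split.
  by apply: contraNneq (kappa_nge Jw) => ->; rewrite lex1.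
have ge_w t : kappa w <= t -> kappa w != t -> w <= t.
  move=> kt; apply: contraNT => wt; rewrite eq_le kt le_kappa //.
  exact: le_trans (join_below_le_kappa w) kt.
move=> u v E; have [<-|ku] := eqVneq (kappa w) u; first by left.
have [<-|kv] := eqVneq (kappa w) v; first by right.
have wu : w <= u by apply: ge_w ku; rewrite E leIl.
have wv : w <= v by apply: ge_w kv; rewrite E leIr.
by case/negP: (kappa_nge Jw); rewrite E lexI wu wv.
Qed.

Lemma le_joinU_kappa a b : join_irreducible a -> kappa a = kappa b ->
  b <= a `|` kappa a.
Proof.
move=> Ja kab; apply: contraT => nb.
case/negP: (kappa_nge Ja); apply: le_trans (leUl _ (kappa a)) _.
rewrite {2}kab; apply: le_kappa nb; rewrite kab.
exact: le_trans (join_below_le_kappa b) (leUr _ _).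
Qed.

Lemma le_of_joinI_kappa a b : join_irreducible a ->
  a <= kappa a `|` (a `&` b) -> a <= b.
Proof.
move=> Ja; apply: contraTT => nab.
have abk : a `&` b <= kappa a.
  rewrite meetC.
  exact: le_trans (meet_le_join_below nab) (join_below_le_kappa a).
by rewrite (join_idPl abk) kappa_nge.
Qed.

Lemma kappa_inj w w' : join_irreducible w -> join_irreducible w' ->
  kappa w = kappa w' -> w = w'.
Proof.
move=> Jw Jw' E.
have le_w'k : w' <= w `|` kappa w := le_joinU_kappa Jw E.
have le_wk : w <= w' `|` kappa w.
  by rewrite E; exact: le_joinU_kappa Jw' (esym E).
have joinE : w `|` kappa w = w' `|` kappa w.
  by apply/le_anti; rewrite !leUx le_w'k le_wk !leUr.
have sd : kappa w `|` (w `&` w') = kappa w `|` w.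
  by apply: SD.1; rewrite joinC joinE joinC.
apply/le_anti/andP; split; apply: le_of_joinI_kappa => //.
  by rewrite sd leUr.
by rewrite meetC -E sd joinC joinE leUl.
Qed.

End Kappa.

Section Numbering.
Context {disp : Order.disp_t} {L : finTBLatticeType disp}.
Variables (n : nat) (x : nat -> L) (j m : 'I_n -> L).
Hypothesis HG : galois_numbering x j m.

Lemma numbering_le (a b : 'I_n) : a < b -> j a <= m b.
Proof.
move=> ab; case: HG => _ _ _ _ /(_ a.+1 (ltn_ord a))[xj xm].
apply: (@le_trans _ _ (x a.+1)).
  by rewrite xj; apply: (joins_sup (fun k => j k)).
by rewrite xm; apply: (meets_inf (fun k => m k)).
Qed.

Lemma numbering_nle (a : 'I_n) : ~~ (j a <= m a).
Proof.
apply/negP => jm; case: HG => _ covers_x _ _ xE.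
have /andP[lt_x _] := covers_x a (ltn_ord a).
suff: x a.+1 <= x a by move=> /(lt_le_trans lt_x); rewrite ltxx.
rewrite (xE _ (ltn_ord a)).1 (xE _ (ltnW (ltn_ord a))).2.
apply/meetsP => b ab; apply/joinsP => k; rewrite ltnS => ka.
have [kb|bk] := ltnP k b; first exact: numbering_le.
have -> : b = a by apply/val_inj/anti_leq; rewrite (leq_trans bk ka).
by have -> : k = a by apply/val_inj/anti_leq; rewrite ka (leq_trans ab bk).
Qed.

Hypothesis EX : extremal (L := L).
Hypothesis Hn : n = lattice_length (L := L).

Lemma numbering_j_onto w : join_irreducible w -> exists a, j a = w.
Proof.
case: HG => _ _ [jJ j_inj] _ _ Jw.
apply: (inj_card_onto_set (A := [set w | join_irreducible w])) j_inj _ _ _ _.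
- by move=> a; rewrite inE.
- by rewrite Hn EX.1.
- by rewrite inE.
Qed.

Lemma numbering_m_onto w : meet_irreducible w -> exists a, m a = w.
Proof.
case: HG => _ _ _ [mM m_inj] _ Mw.
apply: (inj_card_onto_set (A := [set w | meet_irreducible w])) m_inj _ _ _ _.
- by move=> a; rewrite inE.
- by rewrite Hn EX.2.
- by rewrite inE.
Qed.

Hypothesis SD : semidistributive (L := L).

Lemma kappa_numbering (a : 'I_n) : kappa (j a) = m a.
Proof.
case: HG => _ _ [jJ j_inj] _ _.
have [k] := ubnP a; elim: k a => // k IH a ak.
have [b mb] := numbering_m_onto (meet_irreducible_kappa SD (jJ a)).
have : b <= a.
  rewrite leNgt; apply: contraNN (kappa_nge SD (jJ a)).
  by rewrite -mb; exact: numbering_le.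
rewrite le_eqVlt => /orP[/eqP ba | ba]; first by rewrite -mb ba.
have := IH b (leq_trans ba ak); rewrite mb => /(kappa_inj SD (jJ b) (jJ a)).
by move/j_inj => ab; rewrite ab ltxx in ba.
Qed.

Lemma numbering_sep y z : ~~ (y <= z) -> exists a, j a <= y /\ z <= m a.
Proof.
case/exists_join_irreducible_sep => w Jw [wy zk].
by have [a aw] := numbering_j_onto Jw; exists a; rewrite -kappa_numbering aw.
Qed.

End Numbering.

Section Coloring.
Context {disp : Order.disp_t} {L : finTBLatticeType disp}.
Variables (n : nat) (j m : 'I_n -> L).

Lemma galois_complementE u v :
  galois_complement j m u v = [&& u != v, j u <= m v & j v <= m u].
Proof.
rewrite /galois_complement /galois_edge /=.
by case: eqVneq => [<-|uv]; rewrite ?eqxx //= !negbK.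
Qed.

Hypothesis j_nle_m : forall a, ~~ (j a <= m a).

Lemma colorable_of_embeds d :
  embeds_in_Rd L d -> colorable (galois_complement j m) d.
Proof.
case=> F F_mono.
have /choice[col colP] : forall a, exists c, Rlt (F (m a) c) (F (j a) c).
  move=> a; apply: contrapT => none; case/negP: (j_nle_m a); apply/F_mono => c.
  by apply: Rnot_lt_le => lt; apply: none; exists c.
apply/existsP; exists [ffun a => col a]; apply/forallP => u; apply/forallP => v.
apply/implyP => /andP[_]; rewrite galois_complementE => /and3P[_ juv jvu].
rewrite !ffunE; apply/eqP => same.
have := (F_mono _ _).1 juv (col u); have := (F_mono _ _).1 jvu (col u).
have := colP u; have := colP v; rewrite -same; lra.
Qed.

Hypothesis j_le_m : forall a b : 'I_n, a < b -> j a <= m b.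
Hypothesis sep : forall y z : L, ~~ (y <= z) -> exists a, j a <= y /\ z <= m a.

Definition color_rank k (f : 'I_n -> 'I_k) (c : 'I_k) (y : L) : nat :=
  \max_(a | (f a == c) && (j a <= y)) a.+1.

Lemma color_rank_le k (f : 'I_n -> 'I_k) c y z :
  y <= z -> (color_rank f c y <= color_rank f c z)%N.
Proof.
move=> yz; apply/bigmax_leqP => a /andP[fa ja].
by apply: leq_bigmax_cond; rewrite fa (le_trans ja yz).
Qed.

Lemma color_rank_j k (f : 'I_n -> 'I_k) (a : 'I_n) :
  (a.+1 <= color_rank f (f a) (j a))%N.
Proof. by apply: leq_bigmax_cond; rewrite eqxx lexx. Qed.

Lemma color_rank_m k (f : 'I_n -> 'I_k) (a : 'I_n) :
  (forall u v, galois_complement j m u v -> f u != f v) ->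
  (color_rank f (f a) (m a) <= a)%N.
Proof.
move=> f_proper; apply/bigmax_leqP => b /andP[/eqP fab jb].
case: ltngtP => // [ab | /val_inj ba].
  have adj : galois_complement j m a b.
    by rewrite galois_complementE (j_le_m ab) jb -(inj_eq val_inj) neq_ltn ab.
  by move: (f_proper _ _ adj); rewrite fab eqxx.
by move: jb; rewrite ba (negbTE (j_nle_m a)).
Qed.

Lemma embeds_of_colorable k :
  colorable (galois_complement j m) k -> embeds_in_Rd L k.
Proof.
case/existsP => f /forallP f_col.
have f_proper u v : galois_complement j m u v -> f u != f v.
  move=> adj; move/forallP/(_ v)/implyP: (f_col u); apply.
  by rewrite adj andbT; move: adj; rewrite galois_complementE => /andP[].
exists (fun y c => INR (color_rank f c y)) => y z; split.
  by move=> yz c; apply/le_INR/ssrnat.leP/color_rank_le.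
move=> le_yz; apply: contraT => /sep[a [jy zm]].
have /INR_le/ssrnat.leP := le_yz (f a).
have za := leq_trans (color_rank_le f (f a) zm) (color_rank_m a f_proper).
have ay := leq_trans (color_rank_j f a) (color_rank_le f (f a) jy).
by rewrite leqNgt (leq_ltn_trans za ay).
Qed.

End Coloring.

Local Close Scope order_scope.

Theorem theorem3p51 (disp : Order.disp_t) (L : finTBLatticeType disp) :
  semidistributive (L := L) -> extremal (L := L) -> (1 < #|{: L}|)%N ->
  forall (n : nat) (x : nat -> L) (j m : 'I_n -> L),
    n = lattice_length (L := L) ->
    galois_numbering x j m ->
    order_dim L = chromatic_number (galois_complement j m).
Proof.
move=> SD EX _ n x j m Hn HG.
apply: eq_ex_minn => d; apply/asboolP/idP.
  by apply: colorable_of_embeds; exact: numbering_nle HG.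
apply: embeds_of_colorable.
- exact: numbering_nle HG.
- exact: numbering_le HG.
- exact: numbering_sep HG EX Hn SD.
Qed.
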